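(* Consider the system of ODEs $$\frac{dx_j}{dt}=\gamma(\underline{x})\,\nu_0(\underline{x})\,(\hat x_j-x_j),\qquad j=1,\dots,J,$$ in the linear case, i.e. where $\hat x_j=\nu_j/\nu_0$ are constants for $j=1,\dots,J$. For $j_1,j_2\in\{1,\dots,J\}$ define the $(j_1,j_2)$-density $\rho_{j_1,j_2}(t)=x_{j_1}(t)/x_{j_2}(t)$ and the $(j_1,j_2)$-fixed point ratio $\phi_{j_1,j_2}=\nu_{j_1}/\nu_{j_2}$ (constant in this case). Then along any solution, $\rho_{j_1,j_2}(t)$ changes monotonically in $t$.
   Context: Here $\gamma(\underline{x})>0$ is the cumulative clock function and $\nu_j$ is the expected increment of the counting variable $X_j$ per micro-event; $x_j=X_j/X_0$. *)

From HB Require Import structures.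
From mathcomp Require Import all_boot all_order all_algebra.
From mathcomp Require Import all_classical all_reals all_analysis.
Set Implicit Arguments. Unset Strict Implicit. Unset Printing Implicit Defensive.

From HB Require Import structures.
From mathcomp Require Import all_boot all_order all_algebra.
From mathcomp Require Import all_classical all_reals all_analysis.
From mathcomp Require Import ring lra.
Import Order.TTheory GRing.Theory Num.Theory numFieldNormedType.Exports.
Local Open Scope classical_set_scope.
Local Open Scope ring_scope.

(* Write k = gamma nu0 and w = xhat_j1 x_j2 - xhat_j2 x_j1 along the solution.
   Then w' = - k w and rho' = k w / x_j2^2.  As nu0 is continuous and never
   vanishes on the (connected) state space, k has a constant sign, so w^2 is
   monotone; hence w cannot change sign, for a zero of w between two points
   of opposite sign would make w^2 vanish at one of them.  So rho' has a
   constant sign and rho is monotone. *)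

Lemma sign_constant_of_mul_ge0 (T : Type) (R : realDomainType)
    (D : {pred T}) (f : T -> R) :
  {in D &, forall s t, 0 <= f s * f t} ->
  {in D, forall t, 0 <= f t} \/ {in D, forall t, f t <= 0}.
Proof.
move=> fD; have [[s sD fs_gt0]|no_pos] := pselect (exists2 s, s \in D & 0 < f s).
  by left=> t tD; rewrite -(pmulr_rge0 _ fs_gt0) fD.
right=> t tD; rewrite leNgt; apply/negP => ft_gt0.
by apply: no_pos; exists t.
Qed.

Lemma IVT_mul_le0 {R : realType} {f : R -> R} {s t : R} :
  s <= t -> {within `[s, t], continuous f} -> f s * f t <= 0 ->
  exists2 c, c \in `[s, t] & f c = 0.
Proof.
move=> st fc fst; apply: IVT => //; rewrite ge_min le_max.
by case: (lerP (f s) 0) => fs; case: (lerP (f t) 0) => ft //=;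
  rewrite ?orbT ?andbT //; nra.
Qed.

Lemma continuous_neq0_mul_gt0 (R : realType) (V : normedModType R)
    (f : V -> R) :
  continuous f -> (forall y, f y != 0) -> forall y z, 0 < f y * f z.
Proof.
move=> fc f_neq0 y z; rewrite ltNge; apply/negP => fyz.
pose g (s : R) := f (y + s *: (z - y)).
have gc : {within `[0, 1], continuous g}.
  apply: continuous_subspaceT => s; apply: continuous_comp; last exact: fc.
  by apply: cvgD; [exact: cvg_cst | exact: scalel_continuous].
have [|c _ gc0] := IVT_mul_le0 ler01 gc.
  by rewrite /g scale0r addr0 scale1r addrC subrK.
by move: (f_neq0 (y + c *: (z - y))); rewrite -/(g c) gc0 eqxx.
Qed.

Section OpenInterval.
Context {R : realType} {a b : R}.
Local Notation I := `]a, b[.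

Lemma in_itv_oo_between {s t u : R} :
  s \in I -> t \in I -> u \in `[s, t] -> u \in I.
Proof.
rewrite !in_itv /= => /andP[as_ _] /andP[_ tb] /andP[su ut].
by rewrite (lt_le_trans as_ su) (le_lt_trans ut tb).
Qed.

Lemma in_itv_oo_within_continuous {g : R -> R} {s t : R} :
  {in I, continuous g} -> s \in I -> t \in I -> {within `[s, t], continuous g}.
Proof.
move=> gc sI tI; apply: continuous_in_subspaceT => u /[1!inE] ust.
exact: gc (in_itv_oo_between sI tI ust).
Qed.

Context {f df : R -> R}.
Hypothesis f_derive : forall t, t \in I -> is_derive t 1 f (df t).

Lemma is_derive_in_continuous : {in I, continuous f}.
Proof.
move=> t tI; apply/differentiable_continuous/derivable1_diffP.
by have [] := f_derive t tI.
Qed.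

Lemma is_derive_in_derive1 : {in I, forall t, derive1 f t = df t}.
Proof. by move=> t tI; have := f_derive t tI; rewrite derive1E => -[_ ->]. Qed.

Lemma ge0_is_derive_homo_le : {in I, forall t, 0 <= df t} ->
  {in I &, {homo f : s t / s <= t}}.
Proof.
move=> df_ge0; apply: ger0_derive1_le_oo => [t tI|t tI|].
- by have [] := f_derive t tI.
- by rewrite is_derive_in_derive1 ?df_ge0.
- by move=> u /[1!inE] uI; exact: is_derive_in_continuous uI.
Qed.

Lemma le0_is_derive_homo_ge : {in I, forall t, df t <= 0} ->
  {in I &, {homo f : s t /~ s <= t}}.
Proof.
move=> df_le0; apply: ler0_derive1_le_oo => [t tI|t tI|].
- by have [] := f_derive t tI.
- by rewrite is_derive_in_derive1 ?df_le0.
- by move=> u /[1!inE] uI; exact: is_derive_in_continuous uI.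
Qed.

Lemma sign_constant_is_derive_monotone :
  {in I &, forall s t, 0 <= df s * df t} ->
  {in I &, {homo f : s t / s <= t}} \/ {in I &, {homo f : s t /~ s <= t}}.
Proof.
case/sign_constant_of_mul_ge0 => [df_ge0|df_le0].
  by left; exact: ge0_is_derive_homo_le.
by right; exact: le0_is_derive_homo_ge.
Qed.

End OpenInterval.

Section SquareMonotone.
Context {R : realType} {a b : R} {w : R -> R}.
Local Notation I := `]a, b[.

Lemma sqr_monotone_sign_constant : {in I, continuous w} ->
  {in I &, {homo (fun t => w t ^+ 2) : s t / s <= t}} \/
  {in I &, {homo (fun t => w t ^+ 2) : s t /~ s <= t}} ->
  {in I &, forall s t, 0 <= w s * w t}.
Proof.
move=> wc w2_mono.
suff le_case : forall s t, s \in I -> t \in I -> s <= t -> 0 <= w s * w t.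
  move=> s t sI tI; have [st|ts] := leP s t; first exact: le_case.
  by rewrite mulrC; apply: le_case => //; exact: ltW.
move=> s t sI tI st; rewrite leNgt; apply/negP => wst_lt0.
have [c c_st wc0] :=
  IVT_mul_le0 st (in_itv_oo_within_continuous wc sI tI) (ltW wst_lt0).
have cI := in_itv_oo_between sI tI c_st.
move: c_st; rewrite in_itv /= => /andP[sc ct].
have w_eq0 u : w u ^+ 2 <= w c ^+ 2 -> w u = 0.
  rewrite wc0 expr0n /= => w2_le0.
  by apply/eqP; rewrite -sqrf_eq0 eq_le w2_le0 sqr_ge0.
case: w2_mono => [up|down].
- by move: wst_lt0; rewrite (w_eq0 s (up s c sI cI sc)) mul0r ltxx.
- by move: wst_lt0; rewrite (w_eq0 t (down t c tI cI ct)) mulr0 ltxx.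
Qed.

Lemma linear_ode_sign_constant {c : R -> R} :
  (forall t, t \in I -> is_derive t 1 w (c t * w t)) ->
  {in I &, forall s t, 0 <= c s * c t} ->
  {in I &, forall s t, 0 <= w s * w t}.
Proof.
move=> w_ode c_sign.
have w2_derive t : t \in I ->
    is_derive t 1 (fun u => w u ^+ 2) (2 * c t * w t ^+ 2).
  move=> tI; apply: is_derive_eq (is_deriveX 2 (w_ode t tI)) _.
  by rewrite /GRing.scale /=; ring.
apply: sqr_monotone_sign_constant; first exact: is_derive_in_continuous w_ode.
apply: sign_constant_is_derive_monotone w2_derive _ => s t sI tI.
rewrite mulrACA mulr_ge0 //; first by rewrite mulrACA mulr_ge0 ?c_sign.
by rewrite -exprMn sqr_ge0.
Qed.

End SquareMonotone.

Theorem lemma4 (R : realType) (J : nat)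
  (gamma nu0 : 'rV[R]_J -> R) (xhat : 'I_J -> R)
  (x : R -> 'rV[R]_J) (a b : R) (j1 j2 : 'I_J) :
  continuous gamma ->
  continuous nu0 ->
  (forall y, 0 < gamma y) ->
  (forall y, nu0 y != 0) ->
  (forall t, t \in `]a, b[ -> forall j : 'I_J,
     is_derive t 1 (fun s => x s ord0 j)
       (gamma (x t) * nu0 (x t) * (xhat j - x t ord0 j))) ->
  (forall t, t \in `]a, b[ -> x t ord0 j2 != 0) ->
  let rho := fun t => x t ord0 j1 / x t ord0 j2 in
  (forall s t, s \in `]a, b[ -> t \in `]a, b[ -> s <= t -> rho s <= rho t) \/
  (forall s t, s \in `]a, b[ -> t \in `]a, b[ -> s <= t -> rho t <= rho s).
Proof.
move=> _ nu0_cont gamma_gt0 nu0_neq0 x_ode x2_neq0 rho.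
pose k t := gamma (x t) * nu0 (x t).
pose w t := xhat j1 * x t ord0 j2 - xhat j2 * x t ord0 j1.
have k_sign s t : 0 <= k s * k t.
  rewrite /k mulrACA; apply: mulr_ge0; first exact/ltW/mulr_gt0.
  exact/ltW/continuous_neq0_mul_gt0.
have w_ode t : t \in `]a, b[ -> is_derive t 1 w (- k t * w t).
  move=> tI; apply: is_derive_eq
    (is_deriveB (is_deriveZ (xhat j1) (x_ode t tI j2))
                (is_deriveZ (xhat j2) (x_ode t tI j1))) _.
  by rewrite /k /w /GRing.scale /=; ring.
have w_sign : {in `]a, b[ &, forall s t, 0 <= w s * w t}.
  by apply: (linear_ode_sign_constant w_ode) => s t _ _; rewrite mulrNN.
have rho_derive t : t \in `]a, b[ ->
    is_derive t 1 rho (k t * w t / x t ord0 j2 ^+ 2).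
  move=> tI; apply: is_derive_eq
    (is_deriveM (x_ode t tI j1) (is_deriveV (x2_neq0 t tI) (x_ode t tI j2))) _.
  by rewrite /k /w /GRing.scale /=; field; exact: x2_neq0.
have rho'_sign : {in `]a, b[ &, forall s t,
    0 <= k s * w s / x s ord0 j2 ^+ 2 * (k t * w t / x t ord0 j2 ^+ 2)}.
  move=> s t sI tI; rewrite mulrACA; apply: mulr_ge0.
    by rewrite mulrACA mulr_ge0 ?k_sign ?w_sign.
  by rewrite mulr_ge0 ?invr_ge0 ?sqr_ge0.
have [up|down] := sign_constant_is_derive_monotone rho_derive rho'_sign.
- by left=> s t sI tI; exact: up.
- by right=> s t sI tI; exact: down.
Qed.
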